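(* For all tests $b,c$, all $e,f,g,h\in\mathrm{Exp}$ and all $r,s,t,u\in S$: (DF1) $\odot t;(e\oplus_{r,s}f)\equiv e\oplus_{tr,ts}f$; (DF2) $e+_b(f+_cg)\equiv(e+_bf)+_{b+c}g$; (DF3) $e+_b\mathtt 0\equiv b;e$; (DF4) $b;(e+_bf)\equiv b;e$; (DF5) $(e+_bf)\oplus_{r,s}g\equiv(e\oplus_{r,s}g)+_b(f\oplus_{r,s}g)$; (DF6) $(e+_bf)\oplus_{r,s}(g+_bh)\equiv(e\oplus_{r,s}g)+_b(f\oplus_{r,s}h)$; (DF7) $e+_{\mathtt 1}f\equiv e$; (DF8) $b;(e+_cf)\equiv b;e+_cb;f$; (DF9) $b;(e+_cf)\equiv b;(b;e+_cf)$; (DF10) $\odot r;\odot s\equiv\odot(rs)$; (DF11) $\odot r;(e+_bf)\equiv\odot r;e+_b\odot r;f$; (DF12) $g\oplus_{r,s}\odot0\equiv\odot r;g$; (DF13) $b;(e\oplus_{r,s}f)\equiv b;(b;e\oplus_{r,s}f)$; (DF14) $g\oplus_{s,t}(e\oplus_{r,u}\odot0)\equiv g\oplus_{s,tr}e$.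
   Context: Fix a finite set $T$ of primitive tests, a set $\mathrm{Act}$ of atomic actions, a set $\mathrm{Out}$ of return values, and a semiring $(S,+,\cdot,0,1)$ that is positive, refinement and Conway (with ${}^*:S\to S$ satisfying $(a+b)^*=a^*(ba^* )^*$, $(ab)^*=1+a(ba)^*b$). Tests: $b,c\in\mathrm{BExp}::=\mathtt{0}\mid\mathtt{1}\mid t\ (t\in T)\mid\bar b\mid b+c\mid bc$ ($\mathtt 0,\mathtt 1$ false/true, distinct from semiring $0,1$); $\equiv_{BA}$ is Boolean equivalence; $\mathrm{At}$ is the finite set of atoms of the free Boolean algebra on $T$; $\alpha\le b$ means $\alpha$ entails $b$. Expressions: $e,f\in\mathrm{Exp}::= p\in\mathrm{Act}\mid b\in\mathrm{BExp}\mid e+_b f\mid e;f\mid e^{(b)}\mid v\in\mathrm{Out}\mid e\oplus_{r,s} f\ (r,s\in S)$; $\odot r:=\mathtt 1\oplus_{r,0}\mathtt 0$. $E:\mathrm{Exp}\to S^{\mathrm{At}}$: $E(p)_\alpha=E(v)_\alpha=0$; $E(b)_\alpha=1$ if $\alpha\le b$ else $0$; $E(e\oplus_{r,s}f)_\alpha=rE(e)_\alpha+sE(f)_\alpha$; $E(e+_bf)_\alpha=E(e)_\alpha$ if $\alpha\le b$ else $E(f)_\alpha$; $E(e;f)_\alpha=E(e)_\alpha E(f)_\alpha$; $E(e^{(b)})_\alpha=E(\bar b)_\alpha$. The relation $\equiv$ is the smallest congruence on $\mathrm{Exp}$ (tests taken up to $\equiv_{BA}$; sequencing binds tighter than $\oplus$,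 $\odot$ binds tightest) containing, for all $e,f,g\in\mathrm{Exp}$, tests $b,c$, $v\in\mathrm{Out}$, $r,s,t,u\in S$: (G1) $e+_be\equiv e$; (G2) $e+_bf\equiv b;e+_bf$; (G3) $e+_bf\equiv f+_{\bar b}e$; (G4) $(e+_bf)+_cg\equiv e+_{bc}(f+_cg)$; (D1) $e\oplus_{r,s}(f+_bg)\equiv(e\oplus_{r,s}f)+_b(e\oplus_{r,s}g)$; (D2) $e\oplus_{r,s}(f\oplus_{t,u}g)\equiv e\oplus_{r,1}(f\oplus_{st,su}g)$; (D3) $b;(e\oplus_{r,s}f)\equiv b;(b;e\oplus_{r,s}b;f)$; (S1) $\mathtt 1;e\equiv e\equiv e;\mathtt 1$; (S2) $(e;f);g\equiv e;(f;g)$; (S3) $\mathtt 0;e\equiv\mathtt 0$; (S4) $(e\oplus_{r,s}f);g\equiv e;g\oplus_{r,s}f;g$; (S5) $(e+_bf);g\equiv e;g+_bf;g$; (S6) $v;e\equiv v$; (S7) $b;c\equiv bc$; (L1) $e^{(b)}\equiv e;e^{(b)}+_b\mathtt 1$; (C1) $\odot1\equiv\mathtt 1$; (C2) $\odot0;e\equiv\odot0$; (W1) $e\oplus_{r,s}e\equiv\odot(r+s);e$; (W2) $e\oplus_{r,s}f\equiv f\oplus_{s,r}e$; (W3) $e\oplus_{r,s}(f\oplus_{t,u}g)\equiv(e\oplus_{r,st}f)\oplus_{1,su}g$; (W4) $e\oplus_{ru,s}f\equiv(\odot u;e)\oplus_{r,s}f$; and closed under the rules (L2) if $e\equiv(f\oplus_{r,s}\mathtt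 1)+_cg$ then $c;e^{(b)}\equiv c;((\odot(s^*r);f;e^{(b)})+_b\mathtt 1)$; (F1) if $g\equiv e;g+_bf$ and $E(e)_\alpha=0$ for all $\alpha\in\mathrm{At}$ then $g\equiv e^{(b)};f$. *)

From HB Require Import structures.
From mathcomp Require Import all_boot all_algebra.
Set Implicit Arguments. Unset Strict Implicit. Unset Printing Implicit Defensive.
Import GRing.Theory.
Local Open Scope ring_scope.

Section SemiringProps.
Variable S : pzSemiRingType.

Definition positive_semiring : Prop :=
  (forall a b : S, a + b = 0 -> a = 0 /\ b = 0) /\
  (forall a b : S, a * b = 0 -> a = 0 \/ b = 0).

Definition refinement_semiring : Prop :=
  forall a1 a2 b1 b2 : S, a1 + a2 = b1 + b2 ->
    exists c11 c12 c21 c22 : S,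
      [/\ a1 = c11 + c12, a2 = c21 + c22, b1 = c11 + c21 & b2 = c12 + c22].

Definition conway_star (star : S -> S) : Prop :=
  (forall a b : S, star (a + b) = star a * star (b * star a)) /\
  (forall a b : S, star (a * b) = 1 + a * star (b * a) * b).
End SemiringProps.

Inductive BExp (T : Type) : Type :=
| BFalse : BExp T
| BTrue : BExp T
| BPrim : T -> BExp T
| BNot : BExp T -> BExp T
| BOr : BExp T -> BExp T -> BExp T
| BAnd : BExp T -> BExp T -> BExp T.

Arguments BFalse {T}. Arguments BTrue {T}.

(* Atoms of the free Boolean algebra on a finite T are identified with the
   valuations T -> bool; [bsat a b] is "a <= b". *)
Definition atom (T : finType) := T -> bool.

Fixpoint bsat (T : finType) (a : atom T) (b : BExp T) : bool :=
  match b with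
  | BFalse => false
  | BTrue => true
  | BPrim t => a t
  | BNot b => ~~ bsat a b
  | BOr b c => bsat a b || bsat a c
  | BAnd b c => bsat a b && bsat a c
  end.

Definition BAeq (T : finType) (b c : BExp T) : Prop :=
  forall a : atom T, bsat a b = bsat a c.

Inductive Exp (T : finType) (Act Out : Type) (S : pzSemiRingType) : Type :=
| EAct : Act -> Exp T Act Out S
| ETest : BExp T -> Exp T Act Out S
| EGuard : Exp T Act Out S -> BExp T -> Exp T Act Out S -> Exp T Act Out S  (* e +_b f *)
| ESeq : Exp T Act Out S -> Exp T Act Out S -> Exp T Act Out S
| ELoop : Exp T Act Out S -> BExp T -> Exp T Act Out S
| EOut : Out -> Exp T Act Out S
| EChoice : Exp T Act Out S -> S -> S -> Exp T Act Out S -> Exp T Act Out S. (* e (+)_{r,s} f *)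

Section Equational.
Variables (T : finType) (Act Out : Type) (S : pzSemiRingType) (star : S -> S).
Local Notation Exp := (Exp T Act Out S).

Definition tst (b : BExp T) : Exp := ETest Act Out S b.
Definition one : Exp := tst BTrue.
Definition zero : Exp := tst BFalse.
(* ⊙r := 1 (+)_{r,0} 0 *)
Definition scal (r : S) : Exp := EChoice one r 0 zero.

Fixpoint Esem (e : Exp) (a : atom T) : S :=
  match e with
  | EAct _ => 0
  | EOut _ => 0
  | ETest b => if bsat a b then 1 else 0
  | EChoice e r s f => r * Esem e a + s * Esem f a
  | EGuard e b f => if bsat a b then Esem e a else Esem f a
  | ESeq e f => Esem e a * Esem f a
  | ELoop e b => if bsat a (BNot b) then 1 else 0
  end.

Inductive eqv : Exp -> Exp -> Prop :=
| eqv_refl e : eqv e e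
| eqv_sym e f : eqv e f -> eqv f e
| eqv_trans e f g : eqv e f -> eqv f g -> eqv e g
| eqv_test b c : BAeq b c -> eqv (tst b) (tst c)
| eqv_guard e e' b c f f' : eqv e e' -> BAeq b c -> eqv f f' ->
    eqv (EGuard e b f) (EGuard e' c f')
| eqv_seq e e' f f' : eqv e e' -> eqv f f' -> eqv (ESeq e f) (ESeq e' f')
| eqv_loop e e' b c : eqv e e' -> BAeq b c -> eqv (ELoop e b) (ELoop e' c)
| eqv_choice e e' r s f f' : eqv e e' -> eqv f f' ->
    eqv (EChoice e r s f) (EChoice e' r s f')
| ax_G1 e b : eqv (EGuard e b e) e
| ax_G2 e b f : eqv (EGuard e b f) (EGuard (ESeq (tst b) e) b f)
| ax_G3 e b f : eqv (EGuard e b f) (EGuard f (BNot b) e)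
| ax_G4 e b c f g : eqv (EGuard (EGuard e b f) c g) (EGuard e (BAnd b c) (EGuard f c g))
| ax_D1 e r s f b g :
    eqv (EChoice e r s (EGuard f b g)) (EGuard (EChoice e r s f) b (EChoice e r s g))
| ax_D2 e r s f t u g :
    eqv (EChoice e r s (EChoice f t u g)) (EChoice e r 1 (EChoice f (s * t) (s * u) g))
| ax_D3 b e r s f :
    eqv (ESeq (tst b) (EChoice e r s f))
        (ESeq (tst b) (EChoice (ESeq (tst b) e) r s (ESeq (tst b) f)))
| ax_S1l e : eqv (ESeq one e) e
| ax_S1r e : eqv e (ESeq e one)
| ax_S2 e f g : eqv (ESeq (ESeq e f) g) (ESeq e (ESeq f g))
| ax_S3 e : eqv (ESeq zero e) zero
| ax_S4 e r s f g : eqv (ESeq (EChoice e r s f) g) (EChoice (ESeq e g) r s (ESeq f g))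
| ax_S5 e b f g : eqv (ESeq (EGuard e b f) g) (EGuard (ESeq e g) b (ESeq f g))
| ax_S6 v e : eqv (ESeq (EOut T Act S v) e) (EOut T Act S v)
| ax_S7 b c : eqv (ESeq (tst b) (tst c)) (tst (BAnd b c))
| ax_L1 e b : eqv (ELoop e b) (EGuard (ESeq e (ELoop e b)) b one)
| ax_C1 : eqv (scal 1) one
| ax_C2 e : eqv (ESeq (scal 0) e) (scal 0)
| ax_W1 e r s : eqv (EChoice e r s e) (ESeq (scal (r + s)) e)
| ax_W2 e r s f : eqv (EChoice e r s f) (EChoice f s r e)
| ax_W3 e r s f t u g :
    eqv (EChoice e r s (EChoice f t u g)) (EChoice (EChoice e r (s * t) f) 1 (s * u) g)
| ax_W4 e r u s f : eqv (EChoice e (r * u) s f) (EChoice (ESeq (scal u) e) r s f)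
| rule_L2 e f r s c g b :
    eqv e (EGuard (EChoice f r s one) c g) ->
    eqv (ESeq (tst c) (ELoop e b))
        (ESeq (tst c) (EGuard (ESeq (scal (star s * r)) (ESeq f (ELoop e b))) b one))
| rule_F1 g e b f :
    eqv g (EGuard (ESeq e g) b f) -> (forall a : atom T, Esem e a = 0) ->
    eqv g (ESeq (ELoop e b) f).
End Equational.

(** All fourteen laws follow from the axioms G, D, S, C and W over an arbitrary
    semiring.  Once [≡] is a setoid in which tests are taken up to Boolean
    equivalence, two facts drive everything.  First, [e ≡ b;e +_b b̄;e], so an
    equation may be checked separately under [b] and under [b̄]; under a test,
    a guarded choice on that test collapses to one branch.  Second,
    [⊙r;e ≡ 0 ⊕_{0,r} e], which turns a scalar prefix into an ordinary
    weighted choice, handled by D1, D2, W2 and W4. *)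

From Corelib Require Import Setoid Morphisms.
From mathcomp Require Import all_boot all_algebra.
Import GRing.Theory.
Local Open Scope ring_scope.

(* The axioms take [star] explicitly although it only occurs in the relation;
   making it implicit lets them be used directly as rewrite rules. *)
Arguments ax_G1 {T Act Out S star}.
Arguments ax_G2 {T Act Out S star}.
Arguments ax_G3 {T Act Out S star}.
Arguments ax_G4 {T Act Out S star}.
Arguments ax_D1 {T Act Out S star}.
Arguments ax_D2 {T Act Out S star}.
Arguments ax_D3 {T Act Out S star}.
Arguments ax_S1l {T Act Out S star}.
Arguments ax_S2 {T Act Out S star}.
Arguments ax_S3 {T Act Out S star}.
Arguments ax_S4 {T Act Out S star}.
Arguments ax_S7 {T Act Out S star}.
Arguments ax_C1 {T Act Out S star}.
Arguments ax_C2 {T Act Out S star}.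
Arguments ax_W2 {T Act Out S star}.
Arguments ax_W4 {T Act Out S star}.

Ltac bexp_eq :=
  let a := fresh "a" in
  move=> a /=;
  repeat match goal with |- context[bsat a ?x] => case: (bsat a x) end;
  done.

Section DerivedLaws.
Variables (T : finType) (Act Out : Type) (S : pzSemiRingType) (star : S -> S).

Local Notation Exp := (Exp T Act Out S).
Local Notation tst := (@tst T Act Out S).
Local Notation zero := (@zero T Act Out S).
Local Notation scal := (@scal T Act Out S).
Local Notation eqv := (@eqv T Act Out S star).
Local Notation "e ≡ f" := (eqv e f) (at level 70).
Local Notation "e ⨾ f" := (ESeq e f) (at level 40, left associativity).
Local Notation "e ◁ b ▷ f" := (EGuard e b f) (at level 50, b at level 49).
Local Notation "e ⊕[ r , s ] f" := (EChoice e r s f) (at level 50).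

Implicit Types (b c : BExp T) (e f g h : Exp) (r s t u : S).

#[local] Instance eqv_Equivalence : Equivalence eqv.
Proof. split; [exact: eqv_refl | exact: eqv_sym | exact: eqv_trans]. Qed.

#[local] Hint Resolve eqv_refl : core.

#[local] Instance BAeq_Equivalence : Equivalence (@BAeq T).
Proof. by split=> [b a | b c bc a | b c d bc cd a]; rewrite ?bc ?cd. Qed.

#[local] Instance tst_Proper : Proper (@BAeq T ==> eqv) tst.
Proof. by move=> b c; apply: eqv_test. Qed.

#[local] Instance EGuard_Proper :
  Proper (eqv ==> @BAeq T ==> eqv ==> eqv) (@EGuard T Act Out S).
Proof. by move=> e e' ee' b c bc f f' ff'; apply: eqv_guard. Qed.

#[local] Instance ESeq_Proper : Proper (eqv ==> eqv ==> eqv) (@ESeq T Act Out S).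
Proof. by move=> e e' ee' f f' ff'; apply: eqv_seq. Qed.

#[local] Instance EChoice_Proper :
  Proper (eqv ==> eq ==> eq ==> eqv ==> eqv) (@EChoice T Act Out S).
Proof. by move=> e e' ee' r _ <- s _ <- f f' ff'; apply: eqv_choice. Qed.

Lemma seq_tstA b c e : tst b ⨾ (tst c ⨾ e) ≡ tst (BAnd b c) ⨾ e.
Proof. by rewrite -ax_S2 ax_S7. Qed.

Lemma seq_tstC b c e : tst b ⨾ (tst c ⨾ e) ≡ tst c ⨾ (tst b ⨾ e).
Proof. by rewrite !seq_tstA; have -> : BAeq (BAnd b c) (BAnd c b) by bexp_eq. Qed.

Lemma seq_tst_idem b e : tst b ⨾ (tst b ⨾ e) ≡ tst b ⨾ e.
Proof. by rewrite seq_tstA; have -> : BAeq (BAnd b b) b by bexp_eq. Qed.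

Lemma seq_tst_false b e : BAeq b BFalse -> tst b ⨾ e ≡ zero.
Proof. by move->; apply: ax_S3. Qed.

Lemma seq_tst_zero b : tst b ⨾ zero ≡ zero.
Proof. by rewrite ax_S7; apply: eqv_test; bexp_eq. Qed.

Lemma guard_else_restrict e b f : e ◁ b ▷ f ≡ e ◁ b ▷ (tst (BNot b) ⨾ f).
Proof. by rewrite ax_G3 ax_G2 ax_G3; have -> : BAeq (BNot (BNot b)) b by bexp_eq. Qed.

Lemma guard_else_congr e b f f' :
  tst (BNot b) ⨾ f ≡ tst (BNot b) ⨾ f' -> e ◁ b ▷ f ≡ e ◁ b ▷ f'.
Proof. by move=> ff'; rewrite guard_else_restrict ff' -guard_else_restrict. Qed.

Lemma guard_split b e : e ≡ (tst b ⨾ e) ◁ b ▷ (tst (BNot b) ⨾ e).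
Proof. by rewrite -guard_else_restrict -ax_G2 ax_G1. Qed.

Lemma eqv_tst_cases b e f :
  tst b ⨾ e ≡ tst b ⨾ f -> tst (BNot b) ⨾ e ≡ tst (BNot b) ⨾ f -> e ≡ f.
Proof. by move=> ef nef; rewrite (guard_split b e) (guard_split b f) ef nef. Qed.

Lemma guard_else_seq_tst e b f : e ◁ b ▷ (tst b ⨾ f) ≡ e ◁ b ▷ zero.
Proof.
apply: guard_else_congr.
by rewrite seq_tstA seq_tst_zero seq_tst_false //; bexp_eq.
Qed.

Lemma guard_zero e b : e ◁ b ▷ zero ≡ tst b ⨾ e.
Proof. by rewrite ax_G2 -(guard_else_seq_tst _ _ e) ax_G1. Qed.

Lemma seq_tst_guard_cond b c c' e f :
  BAeq (BAnd c b) (BAnd c' b) -> tst b ⨾ (e ◁ c ▷ f) ≡ tst b ⨾ (e ◁ c' ▷ f).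
Proof. by move=> cc'; rewrite -!guard_zero !ax_G4 cc'. Qed.

Lemma guard_true e f : e ◁ BTrue ▷ f ≡ e.
Proof.
transitivity (e ◁ BTrue ▷ zero); last by rewrite guard_zero ax_S1l.
by apply: guard_else_congr; rewrite !seq_tst_false //; bexp_eq.
Qed.

Lemma seq_tst_guard_same b e f : tst b ⨾ (e ◁ b ▷ f) ≡ tst b ⨾ e.
Proof. by rewrite (seq_tst_guard_cond _ _ BTrue) ?guard_true //; bexp_eq. Qed.

Lemma seq_tst_guard_compl b e f : tst (BNot b) ⨾ (e ◁ b ▷ f) ≡ tst (BNot b) ⨾ f.
Proof. by rewrite ax_G3 seq_tst_guard_same. Qed.

Lemma guard_guard_or e b f c g :
  e ◁ b ▷ (f ◁ c ▷ g) ≡ (e ◁ b ▷ f) ◁ BOr b c ▷ g.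
Proof.
rewrite ax_G4; have -> : BAeq (BAnd b (BOr b c)) b by bexp_eq.
by apply: guard_else_congr; apply: seq_tst_guard_cond; bexp_eq.
Qed.

Lemma seq_tst_guard b e c f :
  tst b ⨾ (e ◁ c ▷ f) ≡ (tst b ⨾ e) ◁ c ▷ (tst b ⨾ f).
Proof.
apply: (eqv_tst_cases c).
  by rewrite seq_tstC !seq_tst_guard_same seq_tstC.
by rewrite seq_tstC !seq_tst_guard_compl seq_tstC.
Qed.

Lemma seq_tst_guard_then b e c f :
  tst b ⨾ (e ◁ c ▷ f) ≡ tst b ⨾ ((tst b ⨾ e) ◁ c ▷ f).
Proof. by rewrite !seq_tst_guard seq_tst_idem. Qed.

Lemma guard_guard_same e b f g h : (e ◁ b ▷ f) ◁ b ▷ (g ◁ b ▷ h) ≡ e ◁ b ▷ h.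
Proof.
apply: (eqv_tst_cases b); first by rewrite !seq_tst_guard_same.
by rewrite !seq_tst_guard_compl.
Qed.

Lemma scal_seq r e : scal r ⨾ e ≡ zero ⊕[0, r] e.
Proof. by rewrite ax_S4 ax_S1l ax_S3 ax_W2. Qed.

Lemma choice_zero_one e : zero ⊕[0, 1] e ≡ e.
Proof. by rewrite -scal_seq ax_C1 ax_S1l. Qed.

Lemma scal_seq_choice t e r s f : scal t ⨾ (e ⊕[r, s] f) ≡ e ⊕[t * r, t * s] f.
Proof. by rewrite scal_seq ax_D2 choice_zero_one. Qed.

Lemma scal_mul r s : scal r ⨾ scal s ≡ scal (r * s).
Proof. by rewrite scal_seq_choice mulr0. Qed.

Lemma scal_seq_guard r e b f :
  scal r ⨾ (e ◁ b ▷ f) ≡ (scal r ⨾ e) ◁ b ▷ (scal r ⨾ f).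
Proof. by rewrite !scal_seq ax_D1. Qed.

Lemma choice_guard_l e b f r s g :
  (e ◁ b ▷ f) ⊕[r, s] g ≡ (e ⊕[r, s] g) ◁ b ▷ (f ⊕[r, s] g).
Proof. by rewrite ax_W2 ax_D1 (ax_W2 g) (ax_W2 g). Qed.

Lemma choice_guard e b f r s g h :
  (e ◁ b ▷ f) ⊕[r, s] (g ◁ b ▷ h) ≡ (e ⊕[r, s] g) ◁ b ▷ (f ⊕[r, s] h).
Proof. by rewrite choice_guard_l !ax_D1 guard_guard_same. Qed.

Lemma choice_scal0 g r s : g ⊕[r, s] scal 0 ≡ scal r ⨾ g.
Proof.
rewrite scal_seq; symmetry; transitivity (zero ⊕[s * 0, r] g); first by rewrite mulr0.
by rewrite ax_W4 ax_C2 ax_W2.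
Qed.

Lemma seq_tst_choice_then b e r s f :
  tst b ⨾ (e ⊕[r, s] f) ≡ tst b ⨾ ((tst b ⨾ e) ⊕[r, s] f).
Proof. by symmetry; rewrite ax_D3 seq_tst_idem -ax_D3. Qed.

Lemma choice_choice_scal0 g s t e r u :
  g ⊕[s, t] (e ⊕[r, u] scal 0) ≡ g ⊕[s, t * r] e.
Proof. by rewrite choice_scal0 ax_W2 -ax_W4 ax_W2. Qed.

End DerivedLaws.

Theorem mainTheorem6 (T : finType) (Act Out : Type) (S : pzSemiRingType)
  (star : S -> S)
  (Spos : positive_semiring S) (Sref : refinement_semiring S)
  (Sconway : conway_star star) :
  let eqv := @eqv T Act Out S star in
  let tst := @tst T Act Out S in
  let scal := @scal T Act Out S in
  let zero := @zero T Act Out S in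
  forall (b c : BExp T) (e f g h : Exp T Act Out S) (r s t u : S),
  (* DF1 *) eqv (ESeq (scal t) (EChoice e r s f)) (EChoice e (t * r) (t * s) f) /\
  (* DF2 *) eqv (EGuard e b (EGuard f c g)) (EGuard (EGuard e b f) (BOr b c) g) /\
  (* DF3 *) eqv (EGuard e b zero) (ESeq (tst b) e) /\
  (* DF4 *) eqv (ESeq (tst b) (EGuard e b f)) (ESeq (tst b) e) /\
  (* DF5 *) eqv (EChoice (EGuard e b f) r s g)
                (EGuard (EChoice e r s g) b (EChoice f r s g)) /\
  (* DF6 *) eqv (EChoice (EGuard e b f) r s (EGuard g b h))
                (EGuard (EChoice e r s g) b (EChoice f r s h)) /\
  (* DF7 *) eqv (EGuard e BTrue f) e /\
  (* DF8 *) eqv (ESeq (tst b) (EGuard e c f))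
                (EGuard (ESeq (tst b) e) c (ESeq (tst b) f)) /\
  (* DF9 *) eqv (ESeq (tst b) (EGuard e c f))
                (ESeq (tst b) (EGuard (ESeq (tst b) e) c f)) /\
  (* DF10 *) eqv (ESeq (scal r) (scal s)) (scal (r * s)) /\
  (* DF11 *) eqv (ESeq (scal r) (EGuard e b f))
                 (EGuard (ESeq (scal r) e) b (ESeq (scal r) f)) /\
  (* DF12 *) eqv (EChoice g r s (scal 0)) (ESeq (scal r) g) /\
  (* DF13 *) eqv (ESeq (tst b) (EChoice e r s f))
                 (ESeq (tst b) (EChoice (ESeq (tst b) e) r s f)) /\
  (* DF14 *) eqv (EChoice g s t (EChoice e r u (scal 0))) (EChoice g s (t * r) e).
Proof.
move=> /= b c e f g h r s t u.
by repeat split;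
  [ apply: scal_seq_choice | apply: guard_guard_or | apply: guard_zero
  | apply: seq_tst_guard_same | apply: choice_guard_l | apply: choice_guard
  | apply: guard_true | apply: seq_tst_guard | apply: seq_tst_guard_then
  | apply: scal_mul | apply: scal_seq_guard | apply: choice_scal0
  | apply: seq_tst_choice_then | apply: choice_choice_scal0 ].
Qed.
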